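(* Let $\lambda_{\max}>1$ and let $F:[0,\lambda_{\max}]\to\mathbb{R}_+$ be continuously differentiable with $F(0)=0$, such that $F(x)<F^\star$ for all $x\in[0,1)$, $F'(1)>0$, $F''$ exists and is continuous on $(0,\lambda_{\max})$ with $F''(1)<0$, and $F$ is strongly concave. Then there exist $c>0$ and $\varepsilon_0>0$ (depending on $F$) such that for all $\varepsilon\in(0,\varepsilon_0]$, $$q^\star_{TA}(\varepsilon):=\inf\{\mathbb{E}_\pi[\bar q]:\lambda\in\Lambda_2,\ R(\lambda)\le\varepsilon\}\;\ge\; c\sqrt{\frac{\log(1/\varepsilon)}{\varepsilon}}.$$
   Context: For a policy $\lambda:\mathbb{Z}_+\to[0,\lambda_{\max}]$, consider the continuous-time birth–death chain on $\mathbb{Z}_+$ with rate $\lambda(q)$ from $q$ to $q+1$ and rate $1$ from $q$ to $q-1$ ($q\ge1$); when positive recurrent on the states reachable from $0$, $\pi$ is its stationary distribution and $\bar q\sim\pi$. $\Lambda_2$ is the class of two-arrival policies: $\lambda(q)=1+k_1$ for $0\le q<\tau$ and $\lambda(q)=1-k_2$ for $q\ge\tau$, with $\tau\in\mathbb{Z}_+$, $k_1\in(0,\lambda_{\max}-1]$, $k_2\in(0,1]$. $F^\star=\sup\{\mathbb{E}_\alpha[F(X)]:\alpha$ a probability measure on $[0,\lambda_{\max}]$, $X\sim\alpha$, $\mathbb{E}_\alpha[X]\le1\}$ and $R(\lambda)=F^\star-\mathbb{E}_\pi[F(\lambda(\bar q))]$. $F$ strongly concave means there is $a>0$ with $F(y)\le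 F(x)+F'(x)(y-x)-a(y-x)^2$ for all $x,y\in[0,\lambda_{\max}]$. *)

From HB Require Import structures.
From mathcomp Require Import all_boot all_order all_algebra.
From mathcomp Require Import all_classical all_reals all_analysis.
Set Implicit Arguments. Unset Strict Implicit. Unset Printing Implicit Defensive.
Import Order.TTheory GRing.Theory Num.Theory.
Import numFieldNormedType.Exports.
Local Open Scope classical_set_scope.
Local Open Scope ring_scope.

Definition two_arrival {R : realType} (tau : nat) (k1 k2 : R) : nat -> R :=
  fun q => if (q < tau)%N then 1 + k1 else 1 - k2.

Definition in_Lambda2 {R : realType} (lmax : R) (tau : nat) (k1 k2 : R) : Prop :=
  0 < k1 /\ k1 <= lmax - 1 /\ 0 < k2 /\ k2 <= 1.

(* pi is a stationary distribution of the continuous-time birth-death chain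
   with birth rate lam q (q -> q+1) and death rate 1 (q -> q-1, q >= 1):
   a probability distribution on nat solving the global balance equations
   pi Q = 0. *)
Definition stationary_dist {R : realType} (lam pi : nat -> R) : Prop :=
  (forall q, 0 <= pi q) /\
  (series pi @ \oo --> (1 : R)) /\
  (pi 1%N = pi 0%N * lam 0%N) /\
  (forall q : nat, (0 < q)%N ->
      pi q.-1 * lam q.-1 + pi q.+1 = pi q * (lam q + 1)).

(* A probability measure on [0,lmax] is represented as a (Borel) probability
   measure on R giving full mass to [0,lmax]. *)
Definition Fstar {R : realType} (lmax : R) (F : R -> R) : \bar R :=
  ereal_sup [set (\int[P]_(x in [set` `[0, lmax]%R]) (F x)%:E)%E
            | P in [set P : probability R R |
                      P [set` `[0, lmax]] = 1%E /\
                      (\int[P]_(x in [set` `[0, lmax]%R]) x%:E <= 1)%E]].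

From HB Require Import structures.
From mathcomp Require Import all_boot all_order all_algebra.
From mathcomp Require Import all_classical all_reals all_analysis.
From mathcomp Require Import ring lra.
Import Order.TTheory GRing.Theory Num.Theory.
Import numFieldNormedType.Exports.
Local Open Scope classical_set_scope.
Local Open Scope ring_scope.

(* The balance equations give pi(q+1) = lambda(q) pi(q): the stationary law grows
   geometrically at rate 1 + k1 below tau and decays at rate 1 - k2 above it, and
   E_pi[lambda] = 1 - pi(0).  Bounding F(lambda) by its strongly concave expansion
   at 1, the regret is at least F'(1) pi(0) + a k1^2 P(q < tau), so both terms are
   at most eps.  Let U = sqrt(log(1/eps)/eps).  If P(q < tau) > 1/2, then
   k1 = O(sqrt eps), and P(q < tau) <= pi(0) exp(tau kap) / kap for every
   kap >= k1; with kap of order sqrt eps and pi(0) = O(eps) this forces tau of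
   order U.  Otherwise half of the mass lies at or above tau: if k2 <= 1/U this
   geometric tail alone has mean of order U, and if k2 > 1/U then
   pi(tau) >= 1/(2U) is much larger than pi(0), which forces
   tau k1 >= log(1/eps)/4 with k1 = O(U eps), so again tau is of order U.
   Finally E[q] >= (tau - 1)/4 because pi increases on [0, tau].
   Only F'(1) > 0, strong concavity at 1 and continuity of F (for F* >= F(1))
   are used. *)

Lemma bernoulli_onem {R : realDomainType} (x : R) (n : nat) :
  x <= 1 -> 1 - n%:R * x <= (1 - x) ^+ n.
Proof.
move=> x_le1; elim: n => [|n IHn]; first by rewrite mul0r subr0 expr0.
have onem_ge0 : 0 <= 1 - x by rewrite subr_ge0.
have := ler_wpM2l onem_ge0 IHn; rewrite exprS -natr1.
have : 0 <= n%:R * x ^+ 2 :> R by rewrite mulr_ge0 ?sqr_ge0.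
nra.
Qed.

Lemma ler_of_sqr {R : realDomainType} (x y : R) : 0 <= y -> x ^+ 2 <= y ^+ 2 -> x <= y.
Proof.
move=> y_ge0; rewrite -[x ^+ 2]real_normK ?num_real // => sq_le.
apply: le_trans (ler_norm x) _.
by move: sq_le; rewrite ler_sqr ?nnegrE.
Qed.

Definition mass_below {R : realType} (pi : nat -> R) (n : nat) : R :=
  \sum_(0 <= q < n) pi q.

Section TwoArrivalChain.
(* [{pi] is a token of generic_quotient, hence the spaces. *)
Context {R : realType} {tau : nat} {k1 k2 : R} { pi : nat -> R }.
Hypotheses (k1_gt0 : 0 < k1) (k2_gt0 : 0 < k2) (k2_le1 : k2 <= 1).
Hypothesis pi_stat : stationary_dist (two_arrival tau k1 k2) pi.

Local Notation lam := (two_arrival tau k1 k2).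
Local Notation mass := (mass_below pi).

Lemma pi_ge0 q : 0 <= pi q.
Proof. by case: pi_stat. Qed.

Lemma pi_succ q : pi q.+1 = pi q * lam q.
Proof.
case: pi_stat => _ [_ [balance0 balance]].
elim: q => [//|q IHq].
by have := balance q.+1 isT; rewrite /= -IHq; lra.
Qed.

Lemma mass_below_cvg : mass n @[n --> \oo] --> (1 : R).
Proof. by case: pi_stat => _ [+ _]; rewrite seriesEnat. Qed.

Lemma pi_cvg0 : pi n @[n --> \oo] --> (0 : R).
Proof.
case: pi_stat => _ [pi_sum _].
by apply: cvg_series_cvg_0; apply/cvg_ex; exists 1.
Qed.

Lemma mass_belowS n : mass n.+1 = mass n + pi n.
Proof. exact: big_nat_recr. Qed.

Lemma mass_below_ge0 n : 0 <= mass n.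
Proof. by apply: sumr_ge0 => q _; exact: pi_ge0. Qed.

Lemma mass_below_homo : {homo mass : n n' / (n <= n')%N >-> n <= n'}.
Proof.
move=> n n' le_nn'; rewrite /mass_below (big_cat_nat (leq0n n) le_nn') /=.
by rewrite lerDl; apply: sumr_ge0 => q _; exact: pi_ge0.
Qed.

Lemma mass_below_le1 n : mass n <= 1.
Proof.
apply: (ler_cvg_to (cvg_cst _) mass_below_cvg); near=> n'.
by apply: mass_below_homo; near: n'; exact: nbhs_infty_ge.
Unshelve. all: by end_near.
Qed.

Lemma pi_below_tau n : (n <= tau)%N -> pi n = pi 0 * (1 + k1) ^+ n.
Proof.
elim: n => [|n IHn] n_lt; first by rewrite expr0 mulr1.
by rewrite pi_succ IHn ?(ltnW n_lt) // /two_arrival n_lt exprSr mulrA.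
Qed.

Lemma pi_above_tau j : pi (tau + j) = pi tau * (1 - k2) ^+ j.
Proof.
elim: j => [|j IHj]; first by rewrite addn0 expr0 mulr1.
rewrite addnS pi_succ IHj /two_arrival ltnNge leq_addr /=.
by rewrite exprSr mulrA.
Qed.

Lemma k1_mass_below n : (n <= tau)%N -> k1 * mass n = pi n - pi 0.
Proof.
elim: n => [|n IHn] n_lt; first by rewrite /mass_below big_geq // mulr0 subrr.
rewrite mass_belowS mulrDr IHn ?(ltnW n_lt) // pi_succ /two_arrival n_lt.
lra.
Qed.

Lemma k2_mass_above n : (tau <= n)%N -> k2 * (1 - mass n) = pi n.
Proof.
move=> tau_le_n.
have mass_between n' : (n <= n')%N -> k2 * (mass n' - mass n) + pi n' = pi n.
  elim: n' => [|n' IHn']; first by rewrite leqn0 => /eqP ->; rewrite subrr mulr0 add0r.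
  rewrite leq_eqVlt => /orP[/eqP <-|]; first by rewrite subrr mulr0 add0r.
  rewrite ltnS => le_nn'; rewrite mass_belowS pi_succ /two_arrival.
  rewrite ltnNge (leq_trans tau_le_n le_nn') /=.
  by have := IHn' le_nn'; lra.
have lim_eq : k2 * (mass n' - mass n) + pi n' @[n' --> \oo] --> k2 * (1 - mass n) + 0.
  apply: cvgD; last exact: pi_cvg0.
  by apply: cvgMr; apply: cvgB; [exact: mass_below_cvg | exact: cvg_cst].
have lim_cst : k2 * (mass n' - mass n) + pi n' @[n' --> \oo] --> pi n.
  apply: cvg_near_cst; near=> n'.
  by apply: mass_between; near: n'; exact: nbhs_infty_ge.
by rewrite -[LHS]addr0; exact: norm_cvg_unique lim_eq lim_cst.
Unshelve. all: by end_near.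
Qed.

Lemma pi_tau_le_expR : pi tau <= pi 0 * expR (tau%:R * k1).
Proof.
rewrite pi_below_tau // expRM_natl ler_wpM2l ?pi_ge0 //.
by rewrite lerXn2r ?nnegrE ?expR_ge0 ?expR_ge1Dx // addr_ge0 // ltW.
Qed.

Lemma mass_tau_le_expR kap : k1 <= kap ->
  kap * mass tau <= pi 0 * expR (tau%:R * kap).
Proof.
move=> k1_le_kap.
have kap_ge0 : 0 <= kap by apply: le_trans k1_le_kap; exact: ltW.
have pow_le n : (1 + k1) ^+ n <= (1 + kap) ^+ n.
  by rewrite lerXn2r ?nnegrE ?lerD2l // addr_ge0 // ltW.
have mass_le n : (n <= tau)%N -> kap * mass n <= pi 0 * ((1 + kap) ^+ n - 1).
  elim: n => [|n IHn] n_lt; first by rewrite /mass_below big_geq // expr0 subrr !mulr0.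
  rewrite mass_belowS mulrDr pi_below_tau ?(ltnW n_lt) // exprS.
  have := ler_wpM2l kap_ge0 (ler_wpM2l (pi_ge0 0) (pow_le n)).
  by have := IHn (ltnW n_lt); lra.
apply: (le_trans (mass_le tau (leqnn tau))); rewrite ler_wpM2l ?pi_ge0 // expRM_natl.
have : (1 + kap) ^+ tau <= expR kap ^+ tau.
  by rewrite lerXn2r ?nnegrE ?expR_ge0 ?expR_ge1Dx // addr_ge0.
lra.
Qed.

Lemma mass_below_half_tau : mass tau./2 <= 1 / 2.
Proof.
set n := tau./2.
have le_2n_tau : (n + n <= tau)%N by rewrite addnn -[leqRHS](odd_double_half tau) leq_addl.
have pi_shift q : (q < n)%N -> pi q <= pi (q + n).
  move=> q_lt; have le_qn_tau : (q + n <= tau)%N.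
    by apply: leq_trans le_2n_tau; rewrite leq_add2r; exact: ltnW.
  rewrite (pi_below_tau _ le_qn_tau) (pi_below_tau _ (leq_trans (leq_addr n q) le_qn_tau)).
  by rewrite ler_wpM2l ?pi_ge0 // ler_eXn2l ?ltrDl // leq_addr.
have := mass_below_le1 (n + n).
rewrite /mass_below (big_cat_nat (leq0n n) (leq_addr n n)) /=.
rewrite -{2}[n]add0n big_addn addnK.
have : \sum_(0 <= q < n) pi q <= \sum_(0 <= q < n) pi (q + n).
  by rewrite big_nat_cond [leRHS]big_nat_cond; apply: ler_sum => q /andP[/andP[_ /pi_shift]].
lra.
Qed.

Lemma drift_sum M : \sum_(0 <= q < M) pi q * (lam q - 1) = pi M - pi 0.
Proof.
rewrite -(telescope_sumr pi (leq0n M)).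
by apply: eq_bigr => q _; rewrite pi_succ mulrBr mulr1.
Qed.

Lemma sq_drift_sum_ge M : (tau <= M)%N ->
  k1 ^+ 2 * mass tau <= \sum_(0 <= q < M) pi q * (lam q - 1) ^+ 2.
Proof.
move=> le_tau_M; rewrite (big_cat_nat (leq0n tau) le_tau_M) /= mulr_sumr.
rewrite -[leLHS]addr0 lerD //; last first.
  by apply: sumr_ge0 => q _; rewrite mulr_ge0 ?pi_ge0 ?sqr_ge0.
apply: ler_sum_nat => q /andP[_ q_lt].
by rewrite /two_arrival q_lt addrAC subrr add0r mulrC.
Qed.

Lemma regret_ge {F : R -> R} {d a rF : R} : 0 <= a ->
  (forall q, F (lam q) <= F 1 + d * (lam q - 1) - a * (lam q - 1) ^+ 2) ->
  series (fun q => pi q * F (lam q)) @ \oo --> rF ->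
  d * pi 0 + a * (k1 ^+ 2 * mass tau) <= F 1 - rF.
Proof.
move=> a_ge0 F_le; rewrite seriesEnat => rF_cvg.
set B := F 1 * 1 + d * (0 - pi 0) - a * (k1 ^+ 2 * mass tau).
have bound_cvg : F 1 * mass M + d * (pi M - pi 0) - a * (k1 ^+ 2 * mass tau)
    @[M --> \oo] --> B.
  apply: cvgB; last exact: cvg_cst.
  apply: cvgD; first by apply: cvgMr; exact: mass_below_cvg.
  by apply: cvgMr; apply: cvgB; [exact: pi_cvg0 | exact: cvg_cst].
suff : rF <= B by rewrite /B; lra.
apply: (ler_cvg_to rF_cvg bound_cvg); near=> M.
have le_tau_M : (tau <= M)%N by near: M; exact: nbhs_infty_ge.
have pointwise : \sum_(0 <= q < M) pi q * F (lam q) <= \sum_(0 <= q < M)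
    (F 1 * pi q + d * (pi q * (lam q - 1)) - a * (pi q * (lam q - 1) ^+ 2)).
  apply: ler_sum => q _; have := ler_wpM2l (pi_ge0 q) (F_le q); lra.
rewrite /= (le_trans pointwise) // sumrB big_split /= -!mulr_sumr drift_sum.
by have := ler_wpM2l a_ge0 (sq_drift_sum_ge _ le_tau_M); rewrite /mass_below; lra.
Unshelve. all: by end_near.
Qed.

Context {m : R}.
Hypothesis mean_cvg : series (fun q => q%:R * pi q) @ \oo --> m.

Lemma mean_ge_tail n : n%:R * (1 - mass n) <= m.
Proof.
move: mean_cvg; rewrite seriesEnat => m_cvg.
have tail_cvg : n%:R * (mass M - mass n) @[M --> \oo] --> n%:R * (1 - mass n).
  by apply: cvgMr; apply: cvgB; [exact: mass_below_cvg | exact: cvg_cst].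
apply: (ler_cvg_to tail_cvg m_cvg); near=> M.
have le_nM : (n <= M)%N by near: M; exact: nbhs_infty_ge.
rewrite /mass_below (big_cat_nat (leq0n n) le_nM) /= addrC addrK mulr_sumr.
rewrite (big_cat_nat (leq0n n) le_nM) /= -[leLHS]add0r lerD //.
  by apply: sumr_ge0 => q _; rewrite mulr_ge0 ?pi_ge0.
by apply: ler_sum_nat => q /andP[le_nq _]; rewrite ler_wpM2r ?pi_ge0 ?ler_nat.
Unshelve. all: by end_near.
Qed.

Lemma mean_ge_tau : (tau%:R - 1) / 4 <= m.
Proof.
have := mean_ge_tail tau./2; have := mass_below_half_tau.
have tau_le : tau%:R <= 1 + (tau./2)%:R *+ 2 :> R.
  rewrite -{1}(odd_double_half tau) natrD -muln2 natrM mulr_natr lerD2r.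
  by case: (odd tau).
have : 0 <= (tau./2)%:R :> R by [].
nra.
Qed.

Lemma mean_ge_geometric j : j%:R * (1 - mass tau) * (1 - k2) ^+ j <= m.
Proof.
have tail_eq : 1 - mass (tau + j) = (1 - mass tau) * (1 - k2) ^+ j.
  apply: (mulfI (lt0r_neq0 k2_gt0)).
  by rewrite mulrA !k2_mass_above ?leq_addr // pi_above_tau.
apply: le_trans (mean_ge_tail (tau + j)); rewrite tail_eq -mulrA.
rewrite ler_wpM2r ?ler_nat ?leq_addl // mulr_ge0 ?exprn_ge0 ?subr_ge0 //.
exact: mass_below_le1.
Qed.

Lemma mean_ge_of_slow_tail x : 0 <= x -> mass tau <= 1 / 2 -> k2 * x <= 1 ->
  x / 8 - 1 / 4 <= m.
Proof.
move=> x_ge0 light slow.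
set j := Num.trunc (x / 2).
have /andP[j_le j_gt] : j%:R <= x / 2 < j%:R + 1.
  by rewrite natr1; apply: truncn_itv; lra.
have decay : 1 / 2 <= (1 - k2) ^+ j.
  have := bernoulli_onem _ j k2_le1; have := ler_wpM2r (ltW k2_gt0) j_le; lra.
have weight : 1 / 2 * (1 / 2) <= (1 - mass tau) * (1 - k2) ^+ j.
  by apply: ler_pM => //; lra.
have := mean_ge_geometric j; have := ler_wpM2l (ler0n _ j) weight.
rewrite mulrA; lra.
Qed.

Lemma pi_tau_ge_of_fast_tail x : mass tau <= 1 / 2 -> 1 < k2 * x -> 1 <= 2 * pi tau * x.
Proof.
move=> light fast.
have : k2 * x * (1 / 2) <= k2 * x * (1 - mass tau) by apply: ler_wpM2l; lra.
by rewrite -(k2_mass_above _ (leqnn tau)); lra.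
Qed.

Section ScaleTradeoff.
Context {a d eps : R}.
(* [lra] ignores section hypotheses, so the proofs below copy them into the local
   context first. *)
Hypotheses (a_gt0 : 0 < a) (d_gt0 : 0 < d) (eps_gt0 : 0 < eps).
Hypothesis eps_small : eps <= expR (- (4 + 64 / d + 128 * (1 + a) / a)).
Hypothesis regret_le : d * pi 0 + a * (k1 ^+ 2 * mass tau) <= eps.

Local Notation L := (ln eps^-1).
Local Notation U := (Num.sqrt (L / eps)).
Local Notation v := (expR (L / 4)).

Lemma scale_bounds : [/\ 1 <= L, 2 <= v, 2 * L <= d * v & 32 * (1 + a) <= a * v].
Proof.
move: (a_gt0) (d_gt0) => a0 d0.
have L_ge : 4 + 64 / d + 128 * (1 + a) / a <= L.
  move: eps_small; rewrite -ler_ln ?posrE ?expR_gt0 // expRK lnV ?posrE //.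
  lra.
have d_term : 0 <= 64 / d := divr_ge0 (ler0n _ 64) (ltW d_gt0).
have a_term : 0 <= 128 * (1 + a) / a.
  by apply: divr_ge0 (ltW a_gt0); rewrite mulr_ge0 ?addr_ge0 ?ltW.
have dL : 64 <= d * L.
  have h : 64 / d <= L by lra.
  by rewrite ler_pdivrMr // mulrC in h.
have aL : 128 * (1 + a) <= a * L.
  have h : 128 * (1 + a) / a <= L by lra.
  by rewrite ler_pdivrMr // [L * a]mulrC in h.
have v_ge_lin : 1 + L / 4 <= v := expR_ge1Dx _.
have v_ge_quad : 1 + (L / 4) ^+ 2 / 2 <= v.
  by apply: (@expR_ge1Dxn _ _ 1); apply: divr_ge0 => //; lra.
have L_ge0 : 0 <= L by lra.
have dv : d * (1 + (L / 4) ^+ 2 / 2) <= d * v := ler_wpM2l (ltW d_gt0) v_ge_quad.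
have dLL : 64 * L <= d * L * L := ler_wpM2r L_ge0 dL.
have av : a * (1 + L / 4) <= a * v := ler_wpM2l (ltW a_gt0) v_ge_lin.
split; lra.
Qed.

Lemma scale_sqrt : eps * U ^+ 2 = L.
Proof.
have [L_ge1 _ _ _] := scale_bounds.
rewrite sqr_sqrtr ?divr_ge0 ?(le_trans ler01 L_ge1) ?ltW //.
by rewrite mulrC divfK ?gt_eqF.
Qed.

Lemma scale_quart : eps * v ^+ 4 = 1.
Proof.
rewrite -expRM_natl [_%:R * _]mulrC divfK ?pnatr_eq0 // lnK ?posrE ?invr_gt0 //.
by rewrite mulfV ?gt_eqF.
Qed.

Lemma sqrt_scale_bounds : v ^+ 2 <= U <= L * v ^+ 2.
Proof.
have [L_ge1 _ _ _] := scale_bounds.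
have U2 : U ^+ 2 = L * v ^+ 4.
  by apply: (mulfI (lt0r_neq0 eps_gt0)); rewrite scale_sqrt mulrCA scale_quart mulr1.
have v4_ge0 : 0 <= v ^+ 4 by rewrite exprn_ge0 ?expR_ge0.
apply/andP; split; apply: ler_of_sqr.
- exact: sqrtr_ge0.
- by rewrite -exprM U2 ler_peMl.
- by rewrite mulr_ge0 ?exprn_ge0 ?expR_ge0 ?(le_trans ler01 L_ge1).
- rewrite exprMn -exprM U2; apply: ler_wpM2r => //.
  by rewrite expr2 ler_peMl ?(le_trans ler01 L_ge1).
Qed.

Lemma sqrt_scale_gt0 : 0 < U.
Proof.
have /andP[vU _] := sqrt_scale_bounds.
exact: lt_le_trans (exprn_gt0 2 (expR_gt0 _)) vU.
Qed.

Lemma scale_mixed : eps * U * v ^+ 2 <= L.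
Proof.
have /andP[_ UL] := sqrt_scale_bounds.
have e : eps * v ^+ 2 * (L * v ^+ 2) = L * (eps * v ^+ 4) by ring.
rewrite scale_quart mulr1 in e.
have := ler_wpM2l (mulr_ge0 (ltW eps_gt0) (exprn_ge0 2 (expR_ge0 (L / 4)))) UL.
by rewrite e mulrAC.
Qed.

Lemma d_ge_scale : 4 * eps * U <= d /\ 2 * eps * U * v <= d.
Proof.
have [_ v_ge2 dv _] := scale_bounds.
have v_gt0 : 0 < v := expR_gt0 _.
have mixed := scale_mixed.
split.
- rewrite -(ler_pM2r (exprn_gt0 2 v_gt0)).
  have : d * v * 2 <= d * v * v by rewrite ler_wpM2l // mulr_ge0 ?ltW.
  by rewrite expr2; lra.
- rewrite -(ler_pM2r v_gt0); move: mixed; rewrite expr2; lra.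
Qed.

Lemma regret_split : d * pi 0 <= eps /\ a * (k1 ^+ 2 * mass tau) <= eps.
Proof.
have := regret_le; have := mulr_ge0 (ltW d_gt0) (pi_ge0 0).
have := mulr_ge0 (ltW a_gt0) (mulr_ge0 (sqr_ge0 k1) (mass_below_ge0 tau)).
by split; lra.
Qed.

Lemma k1_le_of_heavy_head : 1 / 2 < mass tau -> k1 <= (1 + 2 / a) * (eps * v ^+ 2).
Proof.
move=> heavy; move: (a_gt0) (eps_gt0) => a0 e0.
have [_ ak1] := regret_split.
set t := 2 / a; have t_gt0 : 0 < t by rewrite divr_gt0.
have kap_gt0 : 0 < (1 + t) * (eps * v ^+ 2).
  by apply: mulr_gt0; [lra | exact: mulr_gt0 e0 (exprn_gt0 _ (expR_gt0 _))].
have akap : a * ((1 + t) * (eps * v ^+ 2)) ^+ 2 = (a + 4 + 2 * t) * eps.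
  have -> : ((1 + t) * (eps * v ^+ 2)) ^+ 2 = (1 + t) ^+ 2 * (eps * (eps * v ^+ 4)).
    by ring.
  by rewrite scale_quart mulr1 /t; field; rewrite gt_eqF.
have half : a * k1 ^+ 2 * (1 / 2) <= a * k1 ^+ 2 * mass tau :=
  ler_wpM2l (mulr_ge0 (ltW a0) (sqr_ge0 k1)) (ltW heavy).
have slack : 0 <= (a + 2 + 2 * t) * eps by apply: mulr_ge0; lra.
have : a * k1 ^+ 2 <= a * ((1 + t) * (eps * v ^+ 2)) ^+ 2 by rewrite akap; lra.
by rewrite ler_pM2l //; apply: ler_of_sqr; exact: ltW.
Qed.

Lemma tau_ge_of_heavy_head : 1 / 2 < mass tau -> L * v ^+ 2 <= 4 * (1 + 2 / a) * tau%:R.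
Proof.
move=> heavy; move: (d_gt0) (eps_gt0) => d0 e0.
have [dpi0 _] := regret_split.
have [L_ge1 _ dv _] := scale_bounds.
have v_gt0 : 0 < v := expR_gt0 _.
have t_ge0 : 0 <= 2 / a by rewrite divr_ge0 // ltW.
have k1_le := k1_le_of_heavy_head heavy.
set kap := (1 + 2 / a) * (eps * v ^+ 2) in k1_le *.
have kap_gt0 : 0 < kap := lt_le_trans k1_gt0 k1_le.
have expR_ge : v <= expR (tau%:R * kap).
  have E_ge0 := expR_ge0 (tau%:R * kap).
  have d_mass := ler_wpM2l (ltW d0) (mass_tau_le_expR _ k1_le).
  have half : kap * (1 / 2) <= kap * mass tau := ler_wpM2l (ltW kap_gt0) (ltW heavy).
  have dpi0E := ler_wpM2r E_ge0 dpi0.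
  have dhalf := ler_wpM2l (ltW d0) half.
  have e : eps * (d * (1 + 2 / a) * v ^+ 2 / 2) = d * (kap * (1 / 2)) by rewrite /kap; ring.
  have : eps * (d * (1 + 2 / a) * v ^+ 2 / 2) <= eps * expR (tau%:R * kap) by lra.
  rewrite ler_pM2l // => X_le; apply: le_trans X_le.
  have dv2 : 1 <= d * v / 2 by lra.
  have vdv : v * 1 <= v * (d * v / 2) := ler_wpM2l (ltW v_gt0) dv2.
  have tv : 0 <= 2 / a * (v * (d * v / 2)) by apply: mulr_ge0; lra.
  by rewrite expr2; lra.
have tau_kap : L / 4 <= tau%:R * kap by rewrite -ler_expR.
have := ler_wpM2r (exprn_ge0 2 (ltW v_gt0)) tau_kap.
have -> : tau%:R * kap * v ^+ 2 = tau%:R * (1 + 2 / a) * (eps * v ^+ 4) by rewrite /kap; ring.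
rewrite scale_quart; lra.
Qed.

Section FastTail.
Hypothesis pi_tau_ge : 1 <= 2 * pi tau * U.

Lemma k1_le_of_fast_tail : a * k1 <= 4 * U * eps.
Proof.
move: (a_gt0) (d_gt0) => a0 d0.
have [dpi0 ak1] := regret_split.
have [epsU _] := d_ge_scale.
have U_ge0 : 0 <= U := sqrtr_ge0 _.
have U4_ge0 : 0 <= 4 * U by rewrite mulr_ge0.
have pi0U : 4 * pi 0 * U <= 1.
  have dpi0U := ler_wpM2l U4_ge0 dpi0.
  by rewrite -(ler_pM2l d0) mulr1; lra.
have hk : 1 <= 4 * U * (k1 * mass tau).
  by rewrite (k1_mass_below _ (leqnn tau)); move: pi_tau_ge; lra.
have ak1_hk := ler_wpM2l (ltW (mulr_gt0 a0 k1_gt0)) hk.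
have U_ak1 := ler_wpM2l U4_ge0 ak1.
lra.
Qed.

Lemma expR_ge_of_fast_tail : v <= expR (tau%:R * k1).
Proof.
move: (d_gt0) (eps_gt0) => d0 e0.
have [dpi0 _] := regret_split.
have [_ epsUv] := d_ge_scale.
have U_gt0 := sqrt_scale_gt0.
have E_ge0 := expR_ge0 (tau%:R * k1).
have dpiT := ler_wpM2l (ltW d0) pi_tau_le_expR.
have dpi0E := ler_wpM2r E_ge0 dpi0.
have dT : d * pi tau <= eps * expR (tau%:R * k1) by lra.
have UdT := ler_wpM2l (ltW U_gt0) dT.
have dTU := ler_wpM2l (ltW d0) pi_tau_ge.
rewrite -(ler_pM2l (mulr_gt0 (mulr_gt0 (ltr0n _ 2) e0) U_gt0 : 0 < 2 * eps * U)).
lra.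
Qed.

Lemma tau_ge_of_fast_tail : a / 16 * U <= tau%:R.
Proof.
move: (a_gt0) (eps_gt0) => a0 e0.
have U_gt0 := sqrt_scale_gt0.
have tau_k1 : L / 4 <= tau%:R * k1 by rewrite -ler_expR expR_ge_of_fast_tail.
have a_tau_k1 := ler_wpM2l (ltW a0) tau_k1.
have tau_k1U := ler_wpM2l (ler0n _ tau) k1_le_of_fast_tail.
have aL : a * (eps * U ^+ 2) = a * L by rewrite scale_sqrt.
rewrite -(ler_pM2l (mulr_gt0 (mulr_gt0 (ltr0n _ 4) U_gt0) e0 : 0 < 4 * U * eps)).
rewrite expr2 in aL; lra.
Qed.
End FastTail.

Lemma mean_ge_sqrt_scale : a / (128 * (1 + a)) * U <= m.
Proof.
move: (a_gt0) => a0.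
have [_ v_ge2 _ av] := scale_bounds.
have /andP[vU UL] := sqrt_scale_bounds.
have v_le_U : v <= U by apply: le_trans vU; rewrite expr2 ler_peMl //; lra.
set g := a / (16 * (1 + a)).
have den_gt0 : 0 < 16 * (1 + a) by lra.
have g_gt0 : 0 < g by rewrite divr_gt0.
have g_le : g <= 1 / 16 by rewrite ler_pdivrMr //; lra.
have ga : g <= a / 16 by rewrite ler_pdivrMr //; nra.
have gv : 2 <= g * v by rewrite mulrAC ler_pdivlMr //; lra.
have gU : 2 <= g * U by apply: le_trans gv _; rewrite ler_wpM2l // ltW.
have -> : a / (128 * (1 + a)) = g / 8 by rewrite /g; field; lra.
have enough : g * U <= tau%:R -> g / 8 * U <= m.
  by move=> gU_le; have := mean_ge_tau; lra.
case: (lerP (mass tau) (1 / 2)) => [light|heavy]; last first.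
  apply: enough.
  have gc : g * (4 * (1 + 2 / a)) <= 1.
    have -> : g * (4 * (1 + 2 / a)) = (a + 2) / (4 * (1 + a)) by rewrite /g; field; lra.
    by rewrite ler_pdivrMr; lra.
  have h1 := ler_wpM2l (ltW g_gt0) UL.
  have h2 := ler_wpM2l (ltW g_gt0) (tau_ge_of_heavy_head heavy).
  have h3 := ler_wpM2r (ler0n _ tau) gc.
  lra.
case: (lerP (k2 * U) 1) => [slow|fast].
  have := mean_ge_of_slow_tail _ (sqrtr_ge0 _) light slow.
  have := ler_wpM2r (sqrtr_ge0 (L / eps)) g_le.
  lra.
apply: enough; have := tau_ge_of_fast_tail (pi_tau_ge_of_fast_tail _ light fast).
have := ler_wpM2r (sqrtr_ge0 (L / eps)) ga.
lra.
Qed.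
End ScaleTradeoff.

End TwoArrivalChain.

Lemma two_arrival_in_range {R : realType} {lmax : R} {tau : nat} {k1 k2 : R} (q : nat) :
  in_Lambda2 lmax tau k1 k2 -> 0 <= two_arrival tau k1 k2 q <= lmax.
Proof.
by case=> k1_gt0 [k1_le [k2_gt0 k2_le1]]; rewrite /two_arrival; case: ifP => _; lra.
Qed.

Lemma F_le_Fstar {R : realType} {lmax : R} {F : R -> R} {x : R} :
  0 <= x <= lmax -> x <= 1 -> {within `[0, lmax], continuous F} ->
  ((F x)%:E <= Fstar lmax F)%E.
Proof.
move=> x_in x_le1 F_cont.
have x_in' : [set` `[0, lmax]] x by rewrite /= in_itv.
have itv_meas : measurable [set` `[(0 : R), lmax]] := measurable_itv _.
apply: ereal_sup_ubound; exists (\d_x : probability R R).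
  split; first by rewrite /= diracE mem_set.
  by rewrite integral_dirac //= diracE mem_set // mul1e lee_fin.
rewrite integral_dirac //; first by rewrite diracE mem_set // mul1e.
apply/measurable_realfun.measurable_EFinP.
exact: measurable_realfun.subspace_continuous_measurable_fun.
Qed.

Theorem theorem6p2 (R : realType) (lmax : R) (F dF d2F : R -> R) :
  1 < lmax ->
  (* F : [0,lmax] -> R_+, continuously differentiable on [0,lmax] with
     derivative dF (one-sided at the endpoints via continuous extension) *)
  (forall x, 0 <= x <= lmax -> 0 <= F x) ->
  {within `[0, lmax], continuous F} ->
  (forall x, 0 < x < lmax -> is_derive x 1 F (dF x)) ->
  {within `[0, lmax], continuous dF} ->
  F 0 = 0 ->
  (forall x, 0 <= x < 1 -> ((F x)%:E < Fstar lmax F)%E) ->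
  0 < dF 1 ->
  (* F'' exists and is continuous on (0,lmax), F''(1) < 0 *)
  (forall x, 0 < x < lmax -> is_derive x 1 dF (d2F x)) ->
  {in `]0, lmax[, continuous d2F} ->
  d2F 1 < 0 ->
  (* strong concavity *)
  (exists a : R, 0 < a /\
     forall x y, 0 <= x <= lmax -> 0 <= y <= lmax ->
       F y <= F x + dF x * (y - x) - a * (y - x) ^+ 2) ->
  exists c : R, 0 < c /\ exists eps0 : R, 0 < eps0 /\
    forall eps : R, 0 < eps <= eps0 ->
    (* every feasible two-arrival policy has E_pi[q] >= c sqrt(log(1/eps)/eps),
       i.e. the infimum q*_TA(eps) is at least that bound *)
    forall (tau : nat) (k1 k2 : R), in_Lambda2 lmax tau k1 k2 ->
    forall pi : nat -> R, stationary_dist (two_arrival tau k1 k2) pi ->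
    forall rF : R,
      series (fun q => pi q * F (two_arrival tau k1 k2 q)) @ \oo --> rF ->
      (Fstar lmax F - rF%:E <= eps%:E)%E ->
    forall m : R,
      series (fun q => q%:R * pi q) @ \oo --> m ->
      c * Num.sqrt (ln (eps^-1) / eps) <= m.
Proof.
move=> lmax_gt1 _ F_cont _ _ _ _ dF1_gt0 _ _ _ [a [a_gt0 concave]].
exists (a / (128 * (1 + a))); split; first by rewrite divr_gt0 //; lra.
exists (expR (- (4 + 64 / dF 1 + 128 * (1 + a) / a))); split; first exact: expR_gt0.
move=> eps /andP[eps_gt0 eps_small] tau k1 k2 inL pi pi_stat rF rF_cvg regret m m_cvg.
have [k1_gt0 [_ [k2_gt0 k2_le1]]] := inL.
apply: (mean_ge_sqrt_scale k1_gt0 k2_gt0 k2_le1 pi_stat m_cvg a_gt0 dF1_gt0 eps_gt0 eps_small).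
have one_in : 0 <= (1 : R) <= lmax by apply/andP; split; lra.
have concave1 (q : nat) := concave _ _ one_in (two_arrival_in_range q inL).
have F1_le := F_le_Fstar one_in (lexx 1) F_cont.
have := regret_ge pi_stat (ltW a_gt0) concave1 rF_cvg.
suff : F 1 - rF <= eps by lra.
by rewrite -lee_fin EFinB (le_trans _ regret) // leeB.
Qed.
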